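(* Let $\alpha>0$, $A\ge0$, $B>0$, $t>0$, and let $P_n(x,t)=x^n+\mathsf{p}_1(n,t)x^{n-1}+\cdots$ be the monic polynomials orthogonal on $[0,\infty)$ w.r.t. $w(x,t)=x^\alpha e^{-x}(A+B\theta(x-t))$, with norms $h_n(t)$. Let $r_n(t)=Bt^\alpha e^{-t}P_n(t,t)P_{n-1}(t,t)/h_{n-1}(t)$. Then for $n\ge1$ $$\frac{d}{dt}\mathsf{p}_1(n,t)=r_n(t).$$
   Context: $\theta$ is the Heaviside function ($1$ for $x>0$, $0$ otherwise); $P_n(t,t)$ is $P_n(x,t)$ at $x=t$. *)

From HB Require Import structures.
From mathcomp Require Import all_boot all_order all_algebra.
From mathcomp Require Import all_classical all_reals all_analysis.
Set Implicit Arguments. Unset Strict Implicit. Unset Printing Implicit Defensive.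
Import Order.TTheory GRing.Theory Num.Theory.
Import numFieldNormedType.Exports.
Local Open Scope classical_set_scope.
Local Open Scope ring_scope.

Definition heaviside (R : realType) (x : R) : R := if 0 < x then 1 else 0.

Definition weight (R : realType) (alpha A B t x : R) : R :=
  x `^ alpha * expR (- x) * (A + B * heaviside (x - t)).

Definition ip (R : realType) (alpha A B t : R) (f g : {poly R}) : R :=
  Rintegral lebesgue_measure `[0%R, +oo[%classic
    (fun x => f.[x] * g.[x] * weight alpha A B t x).

Definition hnorm (R : realType) (alpha A B t : R) (p : {poly R}) : R :=
  ip alpha A B t p p.

Definition p1 (R : realType) (P : nat -> R -> {poly R}) (n : nat) (t : R) : R :=
  (P n t)`_n.-1.

Definition rn (R : realType) (alpha A B : R) (P : nat -> R -> {poly R})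
  (n : nat) (t : R) : R :=
  B * t `^ alpha * expR (- t) * (P n t).[t] * (P n.-1 t).[t]
    / hnorm alpha A B t (P n.-1 t).

From HB Require Import structures.
From mathcomp Require Import all_boot all_order all_algebra.
From mathcomp Require Import all_classical all_reals all_analysis.
From mathcomp Require Import measurable_realfun.
From mathcomp Require Import ring lra.

(* Write <f>_t for the integral of f against w(., t) over [0, +oo[.  For s near t the
   polynomial Q = P_n(s) - P_n(t) has degree < n, so by orthogonality
     p1(n,s) - p1(n,t) = Q_{n-1} = <Q P_{n-1}(t)>_t / h_{n-1}(t)
                       = (<F>_t - <F>_s) / h_{n-1}(t),   where F = P_n(s) P_{n-1}(t).
   As w(., t) - w(., s) = B x^alpha e^{-x} on ]t, s], the numerator is
   B (s - t) F(t) t^alpha e^{-t} + o(s - t).  The error term needs P_n(s) -> P_n(t): the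
   same identity with P_{n-1}(t) replaced by any P_k(t), k < n, shows that the moments of Q
   against P_0(t), ..., P_{n-1}(t), which control its coefficients, are
   O(|s - t| (1 + |Q|)); absorbing gives |Q| = O(|s - t|). *)

Set Implicit Arguments.
Unset Strict Implicit.
Unset Printing Implicit Defensive.
Import Order.TTheory GRing.Theory Num.Theory.
Import numFieldNormedType.Exports.
Local Open Scope classical_set_scope.
Local Open Scope ring_scope.

Section PolyNorm1.
Variable R : numDomainType.
Implicit Types p q : {poly R}.

Definition poly_norm1 p : R := \sum_(i < size p) `|p`_i|.

Lemma poly_norm1_widen n p : (size p <= n)%N ->
  poly_norm1 p = \sum_(i < n) `|p`_i|.
Proof.
move=> sp; rewrite /poly_norm1 -!(big_mkord xpredT (fun i => `|p`_i|)).
rewrite (big_cat_nat (leq0n _) sp) /= [X in _ + X]big1_seq ?addr0 //.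
move=> i /andP[_]; rewrite mem_index_iota => /andP[pi _].
by rewrite nth_default ?normr0.
Qed.

Lemma poly_norm1_ge0 p : 0 <= poly_norm1 p.
Proof. exact: sumr_ge0. Qed.

Lemma poly_norm10 : poly_norm1 0 = 0.
Proof. by rewrite /poly_norm1 size_poly0 big_ord0. Qed.

Lemma poly_norm1D p q : poly_norm1 (p + q) <= poly_norm1 p + poly_norm1 q.
Proof.
set n := maxn (size p) (size q).
rewrite !(@poly_norm1_widen n) ?leq_maxl ?leq_maxr ?(leq_trans (size_polyD _ _)) //.
by rewrite -big_split; apply: ler_sum => i _; rewrite coefD ler_normD.
Qed.

Lemma poly_norm1Z c p : poly_norm1 (c *: p) <= `|c| * poly_norm1 p.
Proof.
rewrite (@poly_norm1_widen (size p)) ?size_scale_leq // /poly_norm1 mulr_sumr.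
by apply: ler_sum => i _; rewrite coefZ normrM.
Qed.

Lemma norm_horner_le n p x X : (size p <= n)%N -> `|x| <= X -> 1 <= X ->
  `|p.[x]| <= poly_norm1 p * X ^+ n.
Proof.
move=> sp xX X1; rewrite (horner_coef_wide _ sp) (poly_norm1_widen sp) mulr_suml.
apply: le_trans (ler_norm_sum _ _ _) _; apply: ler_sum => i _.
rewrite normrM normrX ler_wpM2l // (le_trans (lerXn2r _ _ _ xX)) ?nnegrE //.
  exact: le_trans xX.
exact: ler_weXn2l (ltnW (ltn_ord i)).
Qed.

End PolyNorm1.

Lemma size_sub_coef_monic (R : nzRingType) (q p : {poly R}) d :
  (size q <= d.+1)%N -> p \is monic -> size p = d.+1 ->
  (size (q - q`_d *: p)%R <= d)%N.
Proof.
move=> sq mp sp; apply/leq_sizeP => j dj; rewrite coefB coefZ.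
case: (ltngtP d j) dj => // [lt|<-] _.
  rewrite (nth_default _ (leq_trans sq lt)) (nth_default _ (_ : size p <= j)%N) ?sp //.
  by rewrite mulr0 subr0.
by move/monicP: mp; rewrite lead_coefE sp /= => ->; rewrite mulr1 subrr.
Qed.

Lemma exists_nonroot_gt (R : numDomainType) (p : {poly R}) t :
  p != 0 -> exists2 x, t < x & ~~ root p x.
Proof.
move=> pn0; apply: contrapT => no_nonroot.
have allroot x : t < x -> root p x.
  by move=> tx; apply: contrapT => /negP nr; apply: no_nonroot; exists x.
set rs := [seq t + i.+1%:R | i <- iota 0 (size p)].
have rs_roots : all (root p) rs.
  by apply/allP => _ /mapP[i _ ->]; rewrite allroot // ltrDl ltr0n.
have rs_uniq : uniq rs.
  rewrite map_inj_uniq ?iota_uniq // => i j /addrI /eqP.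
  by rewrite eqr_nat eqSS => /eqP.
by have := max_poly_roots pn0 rs_roots rs_uniq; rewrite size_map size_iota ltnn.
Qed.

Lemma norm_le_near (R : numDomainType) (x t d : R) :
  0 < t -> `|x - t| <= d -> `|x| <= t + d.
Proof.
move=> t0 xt; rewrite -(subrK t x) (le_trans (ler_normD _ _)) //.
by rewrite (gtr0_norm t0) addrC lerD2l.
Qed.

Lemma exprn_le_fact_expR (R : realType) (y : R) (m : nat) :
  0 <= y -> y ^+ m <= m`!%:R * expR y.
Proof.
move=> y0; case: m => [|k].
  by rewrite expr0 fact0 mul1r; apply: le_trans (expR_ge1Dx y); rewrite lerDl.
have fact_gt0 : 0 < (k.+1)`!%:R :> R by rewrite ltr0n fact_gt0.
rewrite mulrC -ler_pdivrMr //; apply: le_trans (expR_ge1Dxn k y0).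
by rewrite lerDr.
Qed.

Lemma powR_le_exprn (R : realType) (a : R) : 0 <= a ->
  exists N : nat, forall x : R, 0 <= x -> x `^ a <= (1 + x) ^+ N.
Proof.
move=> a0; exists (Num.trunc a).+1 => x x0.
rewrite -powR_mulrn ?addr_ge0 //.
apply: (@le_trans _ _ ((1 + x) `^ a)).
  by apply: ge0_ler_powR; rewrite ?nnegrE ?addr_ge0 ?lerDr.
by apply: ler_powR; [rewrite lerDl | exact: ltW (truncnS_gt a)].
Qed.

Lemma exprn_expR_half_bounded (R : realType) (m : nat) :
  exists M : R, forall x, 0 <= x -> (1 + x) ^+ m * expR (- x / 2) <= M.
Proof.
exists (2 ^+ m * (m`!%:R * expR 2^-1)) => x x0.
have -> : (1 + x) ^+ m = 2 ^+ m * ((1 + x) / 2) ^+ m.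
  by rewrite -exprMn mulrCA divff ?mulr1.
rewrite -mulrA ler_wpM2l ?exprn_ge0 //.
have y0 : 0 <= (1 + x) / 2 by rewrite divr_ge0 ?addr_ge0.
apply: le_trans (ler_wpM2r (expR_ge0 _) (exprn_le_fact_expR m y0)) _.
by rewrite -mulrA -expRD ler_wpM2l // ler_expR; lra.
Qed.

Lemma continuous_expR_comp (R : realType) (g : R -> R) :
  continuous g -> continuous (fun x => expR (g x)).
Proof.
by move=> cg x; apply: (@continuous_comp _ _ _ g expR); [exact: cg | exact: continuous_expR].
Qed.

Lemma continuous_dist_lt (R : realType) (F : R -> R) x0 :
  {for x0, continuous F} -> forall e, 0 < e ->
  exists2 d, 0 < d & forall x, `|x - x0| < d -> `|F x - F x0| < e.
Proof.
move=> cF e e0.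
have [d /= d0 H] := (nbhs_ballP _ _).1 ((cvgrPdist_lt _ _).1 cF e e0).
exists d => // x xd; rewrite distrC; apply: H.
by rewrite -ball_normE /= distrC.
Qed.

Lemma continuous_locally_bounded (R : realType) (F : R -> R) x0 :
  {for x0, continuous F} ->
  exists2 d, 0 < d & forall x, `|x - x0| < d -> `|F x| <= `|F x0| + 1.
Proof.
move=> cF; have [d d0 near] := continuous_dist_lt cF ltr01.
exists d => // x /near/ltW le1; rewrite -[F x](subrK (F x0)).
by rewrite (le_trans (ler_normD _ _)) // addrC lerD2l.
Qed.

Lemma is_derive_dist_le (R : realType) (f : R -> R) t l :
  (forall e, 0 < e -> exists2 d, 0 < d &
     forall s, `|s - t| < d -> `|f s - f t - (s - t) * l| <= e * `|s - t|) ->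
  is_derive t 1 f l.
Proof.
move=> H.
have C : (fun h : R => h^-1 *: ((f \o shift t) (h *: 1) - f t)) @ 0^' --> l.
  apply/cvgrPdist_le => e e0.
  have [d d0 Hd] := H e e0.
  near=> h.
  have hd : `|h| < d by near: h; exact: dnbhs0_lt.
  have h0 : h != 0 by near: h; exact: nbhs_dnbhs_neq.
  have := Hd (h + t); rewrite addrK => /(_ hd) Hh.
  rewrite /= (_ : h%:A = h); last by rewrite /GRing.scale /= mulr1.
  rewrite (_ : h^-1 *: (f (h + t) - f t) = h^-1 * (f (h + t) - f t)) //.
  rewrite {1}(_ : l = h^-1 * (h * l)); last by rewrite mulrA mulVf // mul1r.
  rewrite -mulrBr normrM normfV ler_pdivrMl ?normr_gt0 //.
  by rewrite distrC (mulrC `|h|).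
apply: DeriveDef; first by apply/cvg_ex; exists l.
exact: cvg_lim.
Unshelve. all: end_near.
Qed.

Lemma bounded_near_le (R : realType) (D : set R) (g : R -> R) (K : R) :
  (forall x, D x -> `|g x| <= K) -> [bounded g x | x in D].
Proof.
move=> H; exists K; split; first exact: num_real.
by move=> K' KK' x Dx /=; apply: le_trans (H x Dx) (ltW KK').
Qed.

Lemma Rintegral_itv_oc_approx (R : realType) (a b : R) (g : R -> R) (c M : R) :
  a <= b -> measurable_fun `]a, b] g ->
  (forall x, a < x -> x <= b -> `|g x - c| <= M) ->
  `|\int[lebesgue_measure]_(x in `]a, b]) g x - (b - a) * c| <= (b - a) * M.
Proof.
move=> ab mg gM; set I := `]a, b]%classic.
have mI : measurable I by exact: measurable_itv.
have muI : fine (lebesgue_measure I) = b - a.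
  rewrite /I lebesgue_measure_itv /= lte_fin.
  by case: ltP => //= ba; apply/esym/eqP; rewrite subr_eq0 eq_le ab ba.
have muI_fin : (lebesgue_measure I < +oo)%E.
  by rewrite /I lebesgue_measure_itv /=; case: ifP; rewrite ?ltry.
have gM' x : I x -> `|g x - c| <= M.
  by rewrite /I /= in_itv /= => /andP[]; exact: gM.
have cst_int r : lebesgue_measure.-integrable I (EFin \o fun=> r).
  by apply: measurable_bounded_integrable => //; exact: (bounded_near_le (K := `|r|)).
have g_int : lebesgue_measure.-integrable I (EFin \o g).
  apply: measurable_bounded_integrable => //.
  apply: (bounded_near_le (K := `|c| + M)) => x Ix.
  by rewrite -[g x](subrK c) (le_trans (ler_normD _ _)) // addrC lerD2l gM'.
have gc_int : lebesgue_measure.-integrable I (EFin \o (fun x => g x - c)).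
  apply: measurable_bounded_integrable => //; first exact: measurable_funB.
  exact: (bounded_near_le (K := M)).
rewrite -muI [_ * c]mulrC [_ * M]mulrC -!Rintegral_cst // -RintegralB //.
apply: le_trans (le_normr_Rintegral _ gc_int) _ => //.
by apply: le_Rintegral => //; exact: integrable_norm.
Qed.

Section Moments.
Variables (R : realType) (alpha A B : R).
Hypotheses (alpha_ge0 : 0 <= alpha) (A_ge0 : 0 <= A) (B_gt0 : 0 < B).

Notation mu := (@lebesgue_measure R).
Notation halfline := (`[0, +oo[%classic : set R).

Definition laguerre_weight (x : R) : R := x `^ alpha * expR (- x).

Definition weighted (f : {poly R}) (x : R) : R := f.[x] * laguerre_weight x.

Definition moment (t : R) (f : {poly R}) : R :=
  \int[mu]_(x in halfline) (f.[x] * weight alpha A B t x).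

Lemma weightE t x :
  weight alpha A B t x = laguerre_weight x * (A + B * heaviside (x - t)).
Proof. by []. Qed.

Lemma laguerre_weight_ge0 x : 0 <= laguerre_weight x.
Proof. by rewrite mulr_ge0 ?powR_ge0 ?expR_ge0. Qed.

Lemma laguerre_weight_gt0 x : 0 < x -> 0 < laguerre_weight x.
Proof. by move=> x0; rewrite mulr_gt0 ?powR_gt0 ?expR_gt0. Qed.

Lemma heaviside_ge0 (x : R) : 0 <= heaviside x.
Proof. by rewrite /heaviside; case: ifP. Qed.

Lemma heaviside_le1 (x : R) : heaviside x <= 1.
Proof. by rewrite /heaviside; case: ifP. Qed.

Lemma weight_ge0 t x : 0 <= weight alpha A B t x.
Proof.
rewrite weightE mulr_ge0 ?laguerre_weight_ge0 // addr_ge0 // mulr_ge0 ?heaviside_ge0 //.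
exact: ltW.
Qed.

Lemma measurable_horner (f : {poly R}) : measurable_fun [set: R] (horner f).
Proof. by apply: continuous_measurable_fun; exact: continuous_horner. Qed.

Lemma measurable_heaviside t :
  measurable_fun [set: R] (fun x : R => heaviside (x - t)).
Proof.
rewrite (_ : (fun x => _) = \1_`]t, +oo[); first exact: measurable_indic.
apply/funext => x; rewrite /heaviside indicE mem_setE in_itv /= andbT subr_gt0.
by case: ifP.
Qed.

Lemma laguerre_weight_continuous x : 0 < x -> {for x, continuous laguerre_weight}.
Proof.
move=> x0; apply: continuousM.
  apply/differentiable_continuous/derivable1_diffP.
  by apply: derivable_powR; rewrite in_itv /= andbT.
by apply: continuous_expR_comp; exact: opp_continuous.
Qed.

Lemma weighted_continuous f x : 0 < x -> {for x, continuous (weighted f)}.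
Proof.
move=> x0; apply: continuousM; first exact: continuous_horner.
exact: laguerre_weight_continuous.
Qed.

Lemma poly_powR_expR_half_bounded (f : {poly R}) :
  exists M, forall x, 0 <= x -> `|f.[x] * x `^ alpha * expR (- x / 2)| <= M.
Proof.
have [N powR_le] := powR_le_exprn alpha_ge0.
have [M exp_le] := exprn_expR_half_bounded R (size f + N).
exists (poly_norm1 f * M) => x x0.
rewrite !normrM (ger0_norm (powR_ge0 _ _)) (ger0_norm (expR_ge0 _)).
have x1 : `|x| <= 1 + x by rewrite ger0_norm ?lerDr.
have x1' : 1 <= 1 + x by rewrite lerDl.
have fx := norm_horner_le (leqnn (size f)) x1 x1'.
rewrite -mulrA; apply: le_trans (ler_wpM2r _ fx) _; first by rewrite mulr_ge0 ?powR_ge0.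
rewrite -mulrA ler_wpM2l ?poly_norm1_ge0 //; apply: le_trans (exp_le x x0).
by rewrite exprD -!mulrA ler_wpM2l ?exprn_ge0 ?addr_ge0 // ler_wpM2r ?powR_le.
Qed.

Lemma measurable_weighted f : measurable_fun [set: R] (weighted f).
Proof.
apply: measurable_funM; first exact: measurable_horner.
apply: measurable_funM; first exact: measurable_powR.
apply: continuous_measurable_fun; apply: continuous_expR_comp.
exact: opp_continuous.
Qed.

Lemma integrable_weighted f : mu.-integrable halfline (EFin \o weighted f).
Proof.
(* Dominated by a multiple of the exponential density of rate 1/2. *)
have [M HM] := poly_powR_expR_half_bounded f.
have exp_int : mu.-integrable halfline (EFin \o exponential_pdf (2^-1 : R)).
  by apply: integrableS (integrable_exponential_pdf _) => //; rewrite invr_gt0.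
have mh : measurable_fun halfline (fun x => 2 * (f.[x] * x `^ alpha * expR (- x / 2))).
  apply: measurable_funTS; apply: measurable_funM => //.
  apply: measurable_funM; first apply: measurable_funM.
  - exact: measurable_horner.
  - exact: measurable_powR.
  apply: continuous_measurable_fun; apply: continuous_expR_comp => x.
  by apply: continuousM; [exact: opp_continuous | exact: cst_continuous].
have bh : [bounded 2 * (f.[x] * x `^ alpha * expR (- x / 2)) | x in halfline].
  apply: (bounded_near_le (K := 2 * M)) => x; rewrite /= in_itv /= andbT => x0.
  by rewrite normrM ger0_norm // ler_wpM2l // HM.
apply: eq_integrable (@integrableMr _ _ _ mu _ (measurable_itv _) _ _ mh bh exp_int).
  exact: measurable_itv.
move=> x; rewrite inE /= in_itv /= andbT => x0.
rewrite /= exponential_pdfE // /weighted /laguerre_weight.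
have -> : expR (- x) = expR (- x / 2) * expR (- 2^-1 * x).
  by rewrite -expRD; congr expR; field.
by congr EFin; field.
Qed.

Lemma integrable_moment t f :
  mu.-integrable halfline (EFin \o fun x => f.[x] * weight alpha A B t x).
Proof.
have mh : measurable_fun halfline (fun x : R => A + B * heaviside (x - t)).
  apply: measurable_funTS; apply: measurable_funD => //.
  by apply: measurable_funM => //; exact: measurable_heaviside.
have bh : [bounded A + B * heaviside (x - t) | x in halfline].
  apply: (bounded_near_le (K := A + B)) => x _.
  rewrite ger0_norm; last by rewrite addr_ge0 // mulr_ge0 ?heaviside_ge0 // ltW.
  by rewrite lerD2l ler_piMr ?heaviside_le1 // ltW.
apply: eq_integrable
  (@integrableMl _ _ _ mu _ (measurable_itv _) _ _ (integrable_weighted f) mh bh).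
  exact: measurable_itv.
by move=> x _; rewrite /= -EFinM weightE mulrA.
Qed.

Lemma ip_moment t (f g : {poly R}) : ip alpha A B t f g = moment t (f * g).
Proof. by apply: eq_Rintegral => x _; rewrite hornerM. Qed.

Lemma momentD t (f g : {poly R}) : moment t (f + g) = moment t f + moment t g.
Proof.
rewrite /moment -RintegralD ?integrable_moment //.
by apply: eq_Rintegral => x _; rewrite hornerD mulrDl.
Qed.

Lemma momentZ t a (f : {poly R}) : moment t (a *: f) = a * moment t f.
Proof.
rewrite /moment -RintegralZl ?integrable_moment //.
by apply: eq_Rintegral => x _; rewrite hornerZ -mulrA.
Qed.

Lemma moment0 t : moment t 0 = 0.
Proof. by rewrite -(scale0r 0) momentZ mul0r. Qed.

Lemma momentB t (f g : {poly R}) : moment t (f - g) = moment t f - moment t g.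
Proof. by rewrite momentD -scaleN1r momentZ mulN1r. Qed.

Lemma moment_ge0 t (f : {poly R}) :
  (forall x, 0 <= x -> 0 <= f.[x]) -> 0 <= moment t f.
Proof.
move=> f_ge0; apply: Rintegral_ge0 => x; rewrite /= in_itv /= andbT => x0.
by rewrite mulr_ge0 ?f_ge0 ?weight_ge0.
Qed.

Lemma moment_le t s (f : {poly R}) : t <= s ->
  (forall x, 0 <= x -> 0 <= f.[x]) -> moment s f <= moment t f.
Proof.
move=> ts f_ge0; apply: le_Rintegral; rewrite ?integrable_moment //.
move=> x; rewrite /= in_itv /= andbT => x0.
rewrite ler_wpM2l ?f_ge0 // !weightE ler_wpM2l ?laguerre_weight_ge0 //.
rewrite lerD2l ler_wpM2l ?(ltW B_gt0) // /heaviside !subr_gt0.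
case: ltP => sx; case: ltP => tx //.
by have := lt_le_trans (le_lt_trans ts sx) tx; rewrite ltxx.
Qed.

Lemma moment_sub_itv a b f : 0 <= a -> a <= b ->
  moment a f - moment b f = \int[mu]_(x in `]a, b]) (B * weighted f x).
Proof.
move=> a0 ab; rewrite /moment -RintegralB ?integrable_moment //.
have sub : `]a, b] `<=` halfline.
  by move=> x; rewrite /= !in_itv /= andbT => /andP[/ltW/(le_trans a0)].
rewrite -(setIidr sub) Rintegral_mkcondr.
apply: eq_Rintegral => x _; rewrite patchE mem_setE in_itv /= !weightE.
rewrite /weighted /heaviside !subr_gt0.
have [ax|xa] := ltP a x; have [bx|xb] := ltP b x => /=.
- by rewrite subrr.
- by ring.
- by have := lt_le_trans (le_lt_trans ab bx) xa; rewrite ltxx.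
- by rewrite subrr.
Qed.

Lemma moment_sub_approx a b f c M : 0 <= a -> a <= b ->
  (forall x, a < x -> x <= b -> `|weighted f x - c| <= M) ->
  `|moment a f - moment b f - B * (b - a) * c| <= B * (b - a) * M.
Proof.
move=> a0 ab fM; rewrite moment_sub_itv // -!mulrA ![B * (_ * _)]mulrCA.
apply: Rintegral_itv_oc_approx => //.
  by apply: measurable_funTS; apply: measurable_funM => //; exact: measurable_weighted.
move=> x ax xb; rewrite -mulrBr normrM gtr0_norm // ler_pM2l //; exact: fM.
Qed.

Lemma moment_increment t s f c M : 0 <= t -> 0 <= s ->
  (forall x, `|x - t| <= `|s - t| -> `|weighted f x - c| <= M) ->
  `|moment t f - moment s f - B * (s - t) * c| <= B * `|s - t| * M.
Proof.
move=> t0 s0 fM; have [ts|st] := leP t s.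
  rewrite [`|s - t|]ger0_norm ?subr_ge0 //; apply: moment_sub_approx => // x tx xs.
  by apply: fM; rewrite !ger0_norm ?subr_ge0 ?lerD2r // ltW.
rewrite [`|s - t|]ler0_norm ?subr_le0 ?(ltW st) // opprB -normrN.
have -> : - (moment t f - moment s f - B * (s - t) * c) =
          moment s f - moment t f - B * (t - s) * c by ring.
apply: moment_sub_approx => // [|x sx xt]; first exact: ltW.
by apply: fM; rewrite !ler0_norm ?subr_le0 ?lerN2 ?lerD2r // ltW.
Qed.

Lemma moment_sqr_gt0 t (p : {poly R}) : 0 <= t -> p != 0 -> 0 < moment t (p * p).
Proof.
move=> t0 p0; have [x0 tx0 px0] := exists_nonroot_gt t p0.
have x0_gt0 : 0 < x0 by exact: le_lt_trans tx0.
have pp_ge0 x : 0 <= x -> 0 <= (p * p).[x] by rewrite hornerM -expr2 sqr_ge0.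
set c := weighted (p * p) x0.
have c_gt0 : 0 < c.
  by rewrite mulr_gt0 ?laguerre_weight_gt0 // hornerM -expr2 exprn_even_gt0.
have [d d0 near_c] := continuous_dist_lt (weighted_continuous (f := p * p) x0_gt0)
  (divr_gt0 c_gt0 (ltr0Sn _ 1)).
set b := x0 + d / 2.
have b_gt : 0 < b - x0 by rewrite /b addrAC subrr add0r divr_gt0.
have x0b : x0 <= b by rewrite -subr_ge0 ltW.
have := @moment_sub_approx x0 b (p * p) c (c / 2) (ltW x0_gt0) x0b.
have /[swap]/[apply] : forall x, x0 < x -> x <= b -> `|weighted (p * p) x - c| <= c / 2.
  move=> x x0x xb; apply/ltW/near_c; rewrite ger0_norm ?subr_ge0 ?(ltW x0x) //.
  apply: le_lt_trans (_ : b - x0 < d); first by rewrite lerD2r.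
  by rewrite /b addrAC subrr add0r ltr_pdivrMr // ltr_pMr // ltr1n.
rewrite ler_norml => /andP[lower _].
have := moment_ge0 b pp_ge0; have := moment_le (ltW tx0) pp_ge0.
have := mulr_gt0 (mulr_gt0 B_gt0 b_gt) c_gt0.
lra.
Qed.

Lemma weightedM (p q : {poly R}) x : weighted (p * q) x = p.[x] * weighted q x.
Proof. by rewrite /weighted hornerM mulrA. Qed.

Lemma norm_weighted_le (p : {poly R}) m x X G : (size p <= m)%N ->
  `|x| <= X -> 1 <= X -> `|laguerre_weight x| <= G ->
  `|weighted p x| <= poly_norm1 p * X ^+ m * G.
Proof.
move=> sp xX X1 wG; rewrite normrM.
by apply: ler_pM => //; exact: norm_horner_le.
Qed.

Variable P : nat -> R -> {poly R}.
Hypothesis P_monic_size :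
  forall n t, 0 < t -> P n t \is monic /\ size (P n t) = n.+1.
Hypothesis P_orth : forall n m t, 0 < t -> (m < n)%N ->
  ip alpha A B t (P n t) (P m t) = 0.

Lemma monic_P n t : 0 < t -> P n t \is monic.
Proof. by case/(P_monic_size n). Qed.

Lemma size_P n t : 0 < t -> size (P n t) = n.+1.
Proof. by case/(P_monic_size n). Qed.

Lemma moment_orth t k n : 0 < t -> (k < n)%N -> moment t (P k t * P n t) = 0.
Proof. by move=> t0 kn; rewrite mulrC -ip_moment P_orth. Qed.

Lemma moment_orth_low t m (q : {poly R}) : 0 < t -> (size q <= m)%N ->
  moment t (q * P m t) = 0.
Proof.
move=> t0; suff low d : (d <= m)%N -> forall q : {poly R}, (size q <= d)%N ->
    moment t (q * P m t) = 0 by exact: low.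
elim: d => [|d IH] dm {}q sq.
  by move: sq; rewrite leqn0 size_poly_eq0 => /eqP ->; rewrite mul0r moment0.
have sr := size_sub_coef_monic sq (monic_P d t0) (size_P d t0).
have -> : q = (q - q`_d *: P d t) + q`_d *: P d t by rewrite subrK.
rewrite mulrDl momentD -scalerAl momentZ.
by rewrite moment_orth // mulr0 addr0 IH // ltnW.
Qed.

Lemma moment_mul_top t m (q : {poly R}) : 0 < t -> (size q <= m.+1)%N ->
  moment t (q * P m t) = q`_m * moment t (P m t * P m t).
Proof.
move=> t0 sq; have sr := size_sub_coef_monic sq (monic_P m t0) (size_P m t0).
rewrite -{1}(subrK (q`_m *: P m t) q) mulrDl momentD moment_orth_low // add0r.
by rewrite -scalerAl momentZ.
Qed.

Lemma poly_norm1_le_moments t m : 0 < t -> exists2 K, 0 <= K &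
  forall q : {poly R}, (size q <= m)%N -> forall E,
  (forall k, (k < m)%N -> `|moment t (q * P k t)| <= E) -> poly_norm1 q <= K * E.
Proof.
move=> t0; elim: m => [|m [K K0 HK]].
  exists 0 => // q; rewrite leqn0 size_poly_eq0 => /eqP -> E _.
  by rewrite poly_norm10 mul0r.
set p := P m t; set h := moment t (p * p).
have h_gt0 : 0 < h by exact: moment_sqr_gt0 (ltW t0) (monic_neq0 (monic_P m t0)).
exists (poly_norm1 p / h + K) => [|q sq E HE].
  by rewrite addr_ge0 // divr_ge0 ?poly_norm1_ge0 // ltW.
set c := q`_m; set r := q - c *: p.
have sr : (size r <= m)%N := size_sub_coef_monic sq (monic_P m t0) (size_P m t0).
have c_le : `|c| <= E / h.
  by rewrite ler_pdivlMr // -(gtr0_norm h_gt0) -normrM -moment_mul_top // HE.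
have r_le : poly_norm1 r <= K * E.
  apply: HK => // k km; rewrite /r mulrBl momentB -scalerAl momentZ.
  by rewrite [p * _]mulrC moment_orth // mulr0 subr0 HE // ltnW.
have -> : q = c *: p + r by rewrite /r addrC subrK.
apply: le_trans (poly_norm1D _ _) _; rewrite mulrDl lerD //.
apply: le_trans (poly_norm1Z _ _) _.
have -> : poly_norm1 p / h * E = E / h * poly_norm1 p by ring.
by rewrite ler_wpM2r ?poly_norm1_ge0.
Qed.

Lemma size_P_sub n s t : 0 < s -> 0 < t -> (size (P n s - P n t)%R <= n)%N.
Proof.
move=> s0 t0; have lead1 : (P n s)`_n = 1.
  by move/monicP: (monic_P n s0); rewrite lead_coefE size_P.
have := size_sub_coef_monic (eq_leq (size_P n s0)) (monic_P n t0) (size_P n t0).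
by rewrite lead1 scale1r.
Qed.

Lemma moment_P_sub n k s t : 0 < s -> 0 < t -> (k < n)%N ->
  moment t ((P n s - P n t) * P k t) =
  moment t (P n s * P k t) - moment s (P n s * P k t).
Proof.
move=> s0 t0 kn.
have -> : moment s (P n s * P k t) = 0 by rewrite mulrC moment_orth_low ?size_P.
by rewrite mulrBl momentB [P n t * _]mulrC moment_orth.
Qed.

Lemma moment_P_sub_le n k s t M : 0 < s -> 0 < t -> (k < n)%N ->
  (forall x, `|x - t| <= `|s - t| -> `|weighted (P n s * P k t) x| <= M) ->
  `|moment t ((P n s - P n t) * P k t)| <= B * `|s - t| * M.
Proof.
move=> s0 t0 kn M_le; rewrite moment_P_sub //.
have := moment_increment (f := P n s * P k t) (c := 0) (M := M) (ltW t0) (ltW s0).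
by rewrite mulr0 subr0 => ->// x /M_le; rewrite subr0.
Qed.

Lemma norm_weighted_P_le n k s t x X G : 0 < s -> 0 < t -> (k < n)%N ->
  `|x| <= X -> 1 <= X -> `|laguerre_weight x| <= G ->
  `|weighted (P n s * P k t) x| <=
  (poly_norm1 (P n t) + poly_norm1 (P n s - P n t)) * X ^+ n.+1 *
  ((\sum_(j < n) poly_norm1 (P j t)) * X ^+ n.+1 * G).
Proof.
move=> s0 t0 kn xX X1 wG; have X0 : 0 <= X := le_trans ler01 X1.
rewrite weightedM normrM; apply: ler_pM => //.
  apply: le_trans (norm_horner_le (eq_leq (size_P n s0)) xX X1) _.
  rewrite ler_wpM2r ?exprn_ge0 //.
  by have := poly_norm1D (P n t) (P n s - P n t); rewrite addrCA subrr addr0.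
apply: le_trans (norm_weighted_le (m := n.+1) _ xX X1 wG) _.
  by rewrite size_P // ltnS ltnW.
rewrite !ler_wpM2r ?exprn_ge0 ?(le_trans (normr_ge0 _) wG) //.
rewrite (bigD1 (Ordinal kn)) //= lerDl.
by apply: sumr_ge0 => *; exact: poly_norm1_ge0.
Qed.

Lemma P_sub_lipschitz t n : 0 < t -> exists2 L, 0 <= L & exists2 d, 0 < d &
  forall s, `|s - t| < d -> poly_norm1 (P n s - P n t) <= L * `|s - t|.
Proof.
move=> t0; have [K K0 HK] := poly_norm1_le_moments n t0.
have [dw dw0 w_le] := continuous_locally_bounded (laguerre_weight_continuous t0).
set X := t + 1; set G := `|laguerre_weight t| + 1.
set bn := poly_norm1 (P n t); set Pk := \sum_(k < n) poly_norm1 (P k t).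
have X1 : 1 <= X by rewrite lerDr ltW.
have X0 : 0 <= X := le_trans ler01 X1.
have G0 : 0 <= G by rewrite addr_ge0.
have Pk0 : 0 <= Pk by apply: sumr_ge0 => *; exact: poly_norm1_ge0.
set W := X ^+ n.+1 * (Pk * X ^+ n.+1 * G).
have W0 : 0 <= W by rewrite /W !mulr_ge0 ?exprn_ge0.
set C := K * B * W; have C0 : 0 <= C := mulr_ge0 (mulr_ge0 K0 (ltW B_gt0)) W0.
exists (2 * C * bn); first exact: mulr_ge0 (mulr_ge0 _ C0) (poly_norm1_ge0 _).
exists (Num.min (Num.min t 1) (Num.min dw (2 * (C + 1))^-1)).
  by rewrite !lt_min t0 ltr01 dw0 invr_gt0 mulr_gt0 // ltr_wpDl.
move=> s; rewrite !lt_min => /andP[/andP[st st1] /andP[stw stC]].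
have s0 : 0 < s by move: st; rewrite ltr_norml; lra.
set beta := poly_norm1 (P n s - P n t).
have beta_le : beta <= C * `|s - t| * (bn + beta).
  have -> : C * `|s - t| * (bn + beta) =
      K * (B * `|s - t| * ((bn + beta) * X ^+ n.+1 * (Pk * X ^+ n.+1 * G))).
    by rewrite /C /W; ring.
  apply: (HK _ (size_P_sub n s0 t0)) => k kn; apply: moment_P_sub_le => // x xt.
  apply: norm_weighted_P_le => //.
    by apply: norm_le_near; rewrite // (le_trans xt) // ltW.
  by apply: w_le; exact: le_lt_trans stw.
have y_le : 2 * (C * `|s - t|) <= 1.
  move: stC; rewrite -[X in _ < X]div1r ltr_pdivlMr ?mulr_gt0 ?ltr_wpDl // => stC.
  by have := normr_ge0 (s - t); nra.
(* beta <= y (bn + beta) with 2 y <= 1 absorbs into beta <= 2 y bn. *)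
have := poly_norm1_ge0 (P n s - P n t); have := poly_norm1_ge0 (P n t).
rewrite -/beta -/bn; have := normr_ge0 (s - t); nra.
Qed.

Lemma weighted_P_near n (q : {poly R}) t : 0 < t -> forall e, 0 < e ->
  exists2 d, 0 < d & forall s x, `|s - t| < d -> `|x - t| < d ->
    `|weighted (P n s * q) x - weighted (P n t * q) t| <= e.
Proof.
move=> t0 e e0; set c := weighted (P n t * q) t.
have [L L0 [dL dL0 P_lip]] := P_sub_lipschitz n t0.
have [dc dc0 near_c] := continuous_dist_lt (weighted_continuous (f := P n t * q) t0)
  (divr_gt0 e0 (ltr0Sn _ 1)).
have [dq dq0 q_le] := continuous_locally_bounded (weighted_continuous (f := q) t0).
set X := t + 1; set G := `|weighted q t| + 1; set D := L * X ^+ n * G.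
have X1 : 1 <= X by rewrite lerDr ltW.
have D0 : 0 <= D by rewrite /D !mulr_ge0 ?exprn_ge0 ?(le_trans ler01 X1) ?addr_ge0.
have dD0 : 0 < e / 2 / (D + 1) by rewrite !divr_gt0 // ltr_wpDl.
exists (Num.min (Num.min (Num.min t 1) dL) (Num.min (Num.min dc dq) (e / 2 / (D + 1)))).
  by rewrite !lt_min t0 ltr01 dL0 dc0 dq0 dD0.
move=> s x; rewrite !lt_min => /andP[/andP[/andP[st _] stL] /andP[_ stD]].
move=> /andP[/andP[/andP[_ xt1] _] /andP[/andP[xtc xtq] _]].
have s0 : 0 < s by move: st; rewrite ltr_norml; lra.
have -> : weighted (P n s * q) x - c =
    (weighted (P n t * q) x - c) + (P n s - P n t).[x] * weighted q x.
  by rewrite !weightedM hornerD hornerN; ring.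
rewrite (splitr e); apply: le_trans (ler_normD _ _) (lerD (ltW (near_c x xtc)) _).
have xX : `|x| <= X by apply: norm_le_near => //; exact: ltW.
rewrite normrM; apply: le_trans (ler_pM _ _ (norm_horner_le (size_P_sub n s0 t0) xX X1)
  (q_le x xtq)) _ => //.
have Dst : D * `|s - t| <= e / 2.
  move: stD; rewrite ltr_pdivlMr ?ltr_wpDl // => stD.
  by have := normr_ge0 (s - t); nra.
rewrite -/G -mulrA; apply: le_trans (ler_wpM2r _ (P_lip s stL)) _.
  by rewrite mulr_ge0 ?exprn_ge0 ?(le_trans ler01 X1) ?addr_ge0.
by rewrite (_ : _ * (X ^+ n * G) = D * `|s - t|) // /D; ring.
Qed.

Lemma p1_sub n s t : (0 < n)%N -> 0 < s -> 0 < t ->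
  p1 P n s - p1 P n t =
  (moment t (P n s * P n.-1 t) - moment s (P n s * P n.-1 t)) /
  moment t (P n.-1 t * P n.-1 t).
Proof.
move=> n0 s0 t0.
have h_gt0 := moment_sqr_gt0 (ltW t0) (monic_neq0 (monic_P n.-1 t0)).
rewrite -moment_P_sub ?prednK // moment_mul_top ?prednK ?size_P_sub //.
by rewrite mulfK ?gt_eqF // /p1 coefB.
Qed.

Lemma is_derive_p1 n (t : R) : (0 < n)%N -> 0 < t ->
  is_derive t 1 (p1 P n) (rn alpha A B P n t).
Proof.
move=> n0 t0; set q := P n.-1 t; set h := moment t (q * q).
set c := weighted (P n t * q) t.
have h_gt0 : 0 < h := moment_sqr_gt0 (ltW t0) (monic_neq0 (monic_P n.-1 t0)).
have -> : rn alpha A B P n t = B * c / h.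
  by rewrite /rn /hnorm ip_moment -/q -/h /c /weighted hornerM /laguerre_weight; ring.
apply: is_derive_dist_le => e e0.
have eB : 0 < e * h / B by rewrite !divr_gt0 ?mulr_gt0.
have [d d0 near] := weighted_P_near n q t0 eB.
exists (Num.min d t) => [|s]; first by rewrite lt_min d0 t0.
rewrite lt_min => /andP[sd st].
have s0 : 0 < s by move: st; rewrite ltr_norml; lra.
have inc := moment_increment (f := P n s * q) (c := c) (ltW t0) (ltW s0)
  (fun x xt => near s x sd (le_lt_trans xt sd)).
rewrite p1_sub // -/q -/h.
have -> : (moment t (P n s * q) - moment s (P n s * q)) / h - (s - t) * (B * c / h)
    = (moment t (P n s * q) - moment s (P n s * q) - B * (s - t) * c) / h.
  by field; rewrite gt_eqF.
rewrite normrM normfV (gtr0_norm h_gt0) ler_pdivrMr //; apply: le_trans inc _.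
by rewrite (_ : _ * (e * h / B) = e * `|s - t| * h) //; field; rewrite gt_eqF.
Qed.

End Moments.

Theorem lemma9 (R : realType) (alpha A B : R) (P : nat -> R -> {poly R}) :
  0 < alpha -> 0 <= A -> 0 < B ->
  (forall (n : nat) (t : R), 0 < t -> P n t \is monic /\ size (P n t) = n.+1) ->
  (forall (n m : nat) (t : R), 0 < t -> (m < n)%N ->
     ip alpha A B t (P n t) (P m t) = 0) ->
  forall (n : nat) (t : R), (1 <= n)%N -> 0 < t ->
    is_derive t 1 (p1 P n) (rn alpha A B P n t).
Proof.
move=> alpha_gt0 A_ge0 B_gt0 P_monic_size P_orth n t n_ge1 t0.
exact: (is_derive_p1 (ltW alpha_gt0) A_ge0 B_gt0 P_monic_size P_orth n_ge1 t0).
Qed.
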